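(* If $\mathcal{A}$ and $\mathcal{B}$ are leaktight probabilistic automata over the same alphabet with disjoint state sets, then their parallel composition $\mathcal{A}\,\|\,\mathcal{B}$ is leaktight.
   Context: Fix a finite alphabet $A$. A probabilistic automaton is $(Q,\delta_0,\Delta,F)$ with $Q$ finite, an initial distribution $\delta_0$ on $Q$ (a single initial state being the special case of a Dirac distribution), $F\subseteq Q$, $\Delta:Q\times A\to\mathcal{D}(Q)$. For $a\in A$ let $M_a(s,t)=\Delta(s,a)(t)$, for $u=a_0\cdots a_{n-1}$ let $M_u=M_{a_0}\cdots M_{a_{n-1}}$ (identity for the empty word), and $\mathbb{P}(s\xrightarrow{u}t)=M_u(s,t)$. A nonnegative $Q\times Q$ matrix $M$ is idempotent if $M(s,t)>0\iff M^2(s,t)>0$ for all $s,t$; a word $u$ is idempotent if $M_u$ is. A leak is a sequence $(u_n)$ of idempotent words such that $M_{u_n}$ converges to an idempotent matrix $M$ and there exist states $r,q$, both recurrent in the Markov chain with transition matrix $M$, with $\lim_n\mathbb{P}(r\xrightarrow{u_n}q)=0$ and $\mathbb{P}(r\xrightarrow{u_n}q)>0$ for all $n$; an automaton is leaktight if it has no leak (this depends only on $Q$ and $\Delta$). For $\mathcal{A}=(Q^{\mathcal{A}},q_0^{\mathcal{A}},\Delta^{\mathcal{A}},F^{\mathcal{A}})$ and $\mathcal{B}=(Q^{\mathcal{B}},q_0^{\mathcal{B}},\Delta^{\mathcal{B}},F^{\mathcal{B}})$ with $Q^{\mathcal{A}}\cap Q^{\mathcal{B}}=\emptyset$, the parallel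 composition is $\mathcal{A}\,\|\,\mathcal{B}=(Q^{\mathcal{A}}\uplus Q^{\mathcal{B}},\ \tfrac12 q_0^{\mathcal{A}}+\tfrac12 q_0^{\mathcal{B}},\ \Delta,\ F^{\mathcal{A}}\cup F^{\mathcal{B}})$ where $\Delta(q,a)=\Delta^{\mathcal{A}}(q,a)$ if $q\in Q^{\mathcal{A}}$ and $\Delta(q,a)=\Delta^{\mathcal{B}}(q,a)$ if $q\in Q^{\mathcal{B}}$. *)

From HB Require Import structures.
From mathcomp Require Import all_boot all_order all_algebra.
From mathcomp Require Import all_classical all_reals all_analysis.
Set Implicit Arguments. Unset Strict Implicit. Unset Printing Implicit Defensive.
Import Order.TTheory GRing.Theory Num.Theory.
Import numFieldNormedType.Exports.
Local Open Scope classical_set_scope.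
Local Open Scope ring_scope.

Section PA.
Variable R : realType.

(* Nonnegative Q x Q matrices are represented as functions Q -> Q -> R. *)
Definition mx (Q : finType) := Q -> Q -> R.

Definition is_distr (Q : finType) (d : Q -> R) : Prop :=
  (forall q, 0 <= d q) /\ \sum_(q : Q) d q = 1.

Definition pt_distr (Q : finType) (q0 : Q) : Q -> R :=
  fun q => if q == q0 then 1 else 0.

Record PA (A Q : finType) := MkPA {
  pa_init  : Q -> R;
  pa_trans : Q -> A -> Q -> R;   (* pa_trans s a t = Delta(s,a)(t) *)
  pa_final : {set Q} }.

Definition is_PA (A Q : finType) (P : PA A Q) : Prop :=
  is_distr (pa_init P) /\ forall s a, is_distr (pa_trans P s a).

Definition mxmul (Q : finType) (M N : mx Q) : mx Q :=
  fun s t => \sum_(r : Q) M s r * N r t.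

Definition mxid (Q : finType) : mx Q := fun s t => if s == t then 1 else 0.

Definition Mletter (A Q : finType) (P : PA A Q) (a : A) : mx Q :=
  fun s t => pa_trans P s a t.

(* M_u = M_{a_0} ... M_{a_{n-1}}, identity for the empty word;
   prob P s u t = P(s -u-> t) = M_u(s,t). *)
Definition Mword (A Q : finType) (P : PA A Q) (u : seq A) : mx Q :=
  foldr (fun a N => mxmul (Mletter P a) N) (@mxid Q) u.

Definition idempotent (Q : finType) (M : mx Q) : Prop :=
  forall s t, 0 < M s t <-> 0 < mxmul M M s t.

Definition accessible (Q : finType) (M : mx Q) (s t : Q) : bool :=
  connect (fun x y => 0 < M x y) s t.

Definition recurrent (Q : finType) (M : mx Q) (s : Q) : Prop :=
  forall t, accessible M s t -> accessible M t s.

Definition is_leak (A Q : finType) (P : PA A Q) (u : nat -> seq A) : Prop :=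
  (forall n, idempotent (Mword P (u n))) /\
  exists M : mx Q,
    (forall s t, (fun n => Mword P (u n) s t) @ \oo --> M s t) /\
    idempotent M /\
    exists r q : Q, recurrent M r /\ recurrent M q /\
      (fun n => Mword P (u n) r q) @ \oo --> (0 : R) /\
      (forall n, 0 < Mword P (u n) r q).

Definition leaktight (A Q : finType) (P : PA A Q) : Prop :=
  forall u : nat -> seq A, ~ is_leak P u.

(* Parallel composition; the disjoint union of the state sets is the sum type. *)
Definition par (A Q1 Q2 : finType) (P1 : PA A Q1) (P2 : PA A Q2) : PA A (Q1 + Q2)%type :=
  {| pa_init := fun x => match x with
                         | inl q => 2^-1 * pa_init P1 q
                         | inr q => 2^-1 * pa_init P2 q end;
     pa_trans := fun x a y => match x, y with
                         | inl s, inl t => pa_trans P1 s a t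
                         | inr s, inr t => pa_trans P2 s a t
                         | _, _ => 0 end;
     pa_final := [set x | match x with
                          | inl q => q \in pa_final P1
                          | inr q => q \in pa_final P2 end] |}.

End PA.

From Pilot Require Import Defs.
From HB Require Import structures.
From mathcomp Require Import all_boot all_order all_algebra.
From mathcomp Require Import all_classical all_reals all_analysis.
Set Implicit Arguments. Unset Strict Implicit. Unset Printing Implicit Defensive.
Import Order.TTheory GRing.Theory Num.Theory.
Import numFieldNormedType.Exports.
Local Open Scope classical_set_scope.
Local Open Scope ring_scope.

(* Every matrix M_u of A || B is block diagonal with blocks the matrices M_u
   of A and of B, and so is the limit of a leak.  The two states witnessing a
   leak of A || B cannot lie in different blocks (the off-diagonal entries are
   0, not positive), so they lie in one block, say A's; restricting all
   matrices to that block preserves idempotence, convergence and recurrence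
   (a block closed under transitions loses no paths), which yields a leak of
   A.  Neither stochasticity nor the initial distributions play a role. *)

Lemma sum_codom (R : nmodType) (T T' : finType) (h : T' -> T) (F : T -> R) :
  injective h -> (forall y, y \notin codom h -> F y = 0) ->
  \sum_(y : T) F y = \sum_(x : T') F (h x).
Proof.
move=> h_inj F0.
rewrite (bigID (mem (codom h))) /= [X in _ + X]big1 ?addr0; last by move=> y /F0.
by rewrite -big_uniq ?big_image //= map_inj_uniq ?enum_uniq.
Qed.

Section Restriction.
Variables (R : realType) (T T' : finType) (h : T' -> T).
Hypothesis h_inj : injective h.

Definition mx_restr (M : mx R T) : mx R T' := fun s t => M (h s) (h t).

Definition mx_closed (M : mx R T) : Prop :=
  forall x y, y \notin codom h -> M (h x) y = 0.

Variable M : mx R T.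
Hypothesis M_closed : mx_closed M.

Lemma mxmul_restr (N : mx R T) s t :
  mxmul (mx_restr M) (mx_restr N) s t = mxmul M N (h s) (h t).
Proof. by rewrite /mxmul (sum_codom h_inj) // => y /M_closed ->; rewrite mul0r. Qed.

Lemma idempotent_restr : Defs.idempotent M -> Defs.idempotent (mx_restr M).
Proof. by move=> M_idem s t; rewrite mxmul_restr; exact: M_idem. Qed.

Lemma accessible_restr x y : accessible (mx_restr M) x y = accessible M (h x) (h y).
Proof.
apply/idP/idP => /connectP [p].
  elim: p x => [|z p IHp] x /= => [_ -> | /andP [xz zp] py]; first exact: connect0.
  by apply: connect_trans (IHp z zp py); apply: connect1.
elim: p x => [|z p IHp] x /= => [_ /h_inj -> | /andP [xz zp] py]; first exact: connect0.
have /codomP [z' z_eq] : z \in codom h.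
  by apply: contraLR xz => /M_closed ->; rewrite ltxx.
by subst z; apply: connect_trans (IHp z' zp py); apply: connect1.
Qed.

Lemma recurrent_restr r : recurrent M (h r) -> recurrent (mx_restr M) r.
Proof. by move=> rec_r t; rewrite !accessible_restr; exact: rec_r. Qed.

End Restriction.

Lemma cvg_closed (R : realType) (T T' : finType) (h : T' -> T)
    (Ms : nat -> mx R T) (M : mx R T) :
  (forall n, mx_closed h (Ms n)) ->
  (forall s t, (fun n => Ms n s t) @ \oo --> M s t) -> mx_closed h M.
Proof.
move=> Ms_closed Ms_cvg x y y_out; have := Ms_cvg (h x) y.
have -> : (fun n => Ms n (h x) y) = fun=> 0 by apply: funext => n; exact: Ms_closed.
by move=> /(cvg_unique _ (cvg_cst 0)) <-.
Qed.

Section LeakRestriction.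
Variables (R : realType) (A T T' : finType) (P : PA R A T) (P' : PA R A T').
Variable h : T' -> T.
Hypothesis h_inj : injective h.
Hypothesis Mword_restr : forall w, Mword P' w = mx_restr h (Mword P w).
Hypothesis Mword_closed : forall w, mx_closed h (Mword P w).

Lemma leak_restr (u : nat -> seq A) (M : mx R T) (r q : T') :
  (forall n, Defs.idempotent (Mword P (u n))) ->
  (forall s t, (fun n => Mword P (u n) s t) @ \oo --> M s t) ->
  Defs.idempotent M -> recurrent M (h r) -> recurrent M (h q) ->
  (fun n => Mword P (u n) (h r) (h q)) @ \oo --> (0 : R) ->
  (forall n, 0 < Mword P (u n) (h r) (h q)) ->
  is_leak P' u.
Proof.
move=> u_idem u_cvg M_idem rec_r rec_q rq_cvg0 rq_pos.
have M_closed : mx_closed h M by apply: cvg_closed u_cvg.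
split=> [n|]; first by rewrite Mword_restr; exact: idempotent_restr.
exists (mx_restr h M); split=> [s t|].
  by under eq_fun do rewrite Mword_restr; exact: u_cvg.
split; first exact: idempotent_restr.
exists r, q; split; first exact: recurrent_restr.
split; first exact: recurrent_restr.
split=> [|n]; last by rewrite Mword_restr; exact: rq_pos.
by under eq_fun do rewrite Mword_restr; exact: rq_cvg0.
Qed.

End LeakRestriction.

Section BlockDiagonal.
Variables (R : realType) (Q1 Q2 : finType).

Definition mx_diag (M1 : mx R Q1) (M2 : mx R Q2) : mx R (Q1 + Q2)%type :=
  fun x y => match x, y with
             | inl s, inl t => M1 s t
             | inr s, inr t => M2 s t
             | _, _ => 0 end.

Lemma mxmul_diag M1 M2 N1 N2 :
  mxmul (mx_diag M1 M2) (mx_diag N1 N2) = mx_diag (mxmul M1 N1) (mxmul M2 N2).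
Proof.
apply: funext => -[s|s]; apply: funext => -[t|t]; rewrite /mxmul big_sumType /=.
- by rewrite [X in _ + X]big1 ?addr0 // => r _; rewrite mul0r.
- by rewrite !big1 ?addr0 // => r _; rewrite ?mul0r ?mulr0.
- by rewrite !big1 ?addr0 // => r _; rewrite ?mul0r ?mulr0.
- by rewrite [X in X + _]big1 ?add0r // => r _; rewrite mul0r.
Qed.

Lemma mxid_diag : @mxid R (Q1 + Q2)%type = mx_diag (@mxid R Q1) (@mxid R Q2).
Proof. by apply: funext => -[s|s]; apply: funext => -[t|t]. Qed.

Lemma mx_diag_closed_inl M1 M2 : mx_closed inl (mx_diag M1 M2).
Proof. by move=> x [y|y] //; rewrite codom_f. Qed.

Lemma mx_diag_closed_inr M1 M2 : mx_closed inr (mx_diag M1 M2).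
Proof. by move=> x [y|y] //; rewrite codom_f. Qed.

Lemma Mword_par A (P1 : PA R A Q1) (P2 : PA R A Q2) w :
  Mword (par P1 P2) w = mx_diag (Mword P1 w) (Mword P2 w).
Proof.
elim: w => [|a w IHw] /=; first exact: mxid_diag.
by rewrite -!/(Mword _ w) IHw -mxmul_diag.
Qed.

Lemma leak_par A (P1 : PA R A Q1) (P2 : PA R A Q2) u :
  is_leak (par P1 P2) u -> is_leak P1 u \/ is_leak P2 u.
Proof.
move=> [u_idem [M [u_cvg [M_idem [r [q [rec_r [rec_q [rq_cvg0 rq_pos]]]]]]]]].
have := rq_pos 0%N; rewrite Mword_par.
case: r q rec_r rec_q rq_cvg0 rq_pos => r [] q rec_r rec_q rq_cvg0 rq_pos /=;
  rewrite ?ltxx // => _.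
- left; apply: (@leak_restr _ _ _ _ (par P1 P2) P1 inl) rq_pos => // [|w|w].
  + exact: inl_inj.
  + by rewrite Mword_par.
  + by rewrite Mword_par; exact: mx_diag_closed_inl.
- right; apply: (@leak_restr _ _ _ _ (par P1 P2) P2 inr) rq_pos => // [|w|w].
  + exact: inr_inj.
  + by rewrite Mword_par.
  + by rewrite Mword_par; exact: mx_diag_closed_inr.
Qed.

End BlockDiagonal.

Theorem proposition4p4 (R : realType) (A QA QB : finType)
    (PA_ : PA R A QA) (PB : PA R A QB) (qA : QA) (qB : QB) :
  is_PA PA_ -> is_PA PB ->
  pa_init PA_ = pt_distr R qA -> pa_init PB = pt_distr R qB ->
  leaktight PA_ -> leaktight PB ->
  leaktight (par PA_ PB).
Proof.
move=> _ _ _ _ tightA tightB u /leak_par [].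
- exact: tightA.
- exact: tightB.
Qed.
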